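(* Let $\varepsilon>0$ and $\delta\in(0,1)$ be such that $k=\frac{1}{\varepsilon}\ln\left(\frac{e^{\varepsilon}+2\delta-1}{(e^{\varepsilon}+1)\delta}\right)$ is an integer. Let $X$ be a random variable with the $k$-truncated symmetric geometric distribution with parameter $1-e^{-\varepsilon}$, and let $\pi_{\mathrm{opt}}$ be the optimal partition selection primitive for $(\varepsilon,\delta)$-differential privacy. Then for all $n\in\mathbb{N}$, $\pi_{\mathrm{opt}}(n)=\Pr[n+X\ge k+1]$.
   Context: $\mathbb{N}=\{0,1,2,\dots\}$. For $p\in(0,1)$ and an integer $k\ge1$, the $k$-truncated symmetric geometric distribution with parameter $p$ is the distribution on $\mathbb{Z}$ with $\Pr[X=x]=c\,(1-p)^{|x|}$ for $x\in[-k,k]\cap\mathbb{Z}$ and $0$ otherwise, where $c=\frac{p}{1+(1-p)-2(1-p)^{k+1}}$. A partition selection primitive is a function $\pi:\mathbb{N}\to[0,1]$ with $\pi(0)=0$; it is $(\varepsilon,\delta)$-DP if, letting $\rho_\pi(n)$ be keep with probability $\pi(n)$ and drop otherwise, for all $n,n'\in\mathbb{N}$ with $|n-n'|=1$ and all $S\subseteq\{\mathrm{drop},\mathrm{keep}\}$, $\Pr[\rho_\pi(n)\in S]\le e^{\varepsilon}\Pr[\rho_\pi(n')\in S]+\delta$. The optimal primitive $\pi_{\mathrm{opt}}$ is the $(\varepsilon,\delta)$-DP primitive with $\pi(n)\le\pi_{\mathrm{opt}}(n)$ for every $(\varepsilon,\delta)$-DP primitive $\pi$ and every $n$; equivalently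 $\pi_{\mathrm{opt}}(0)=0$ and $\pi_{\mathrm{opt}}(n+1)=\min\left(e^{\varepsilon}\pi_{\mathrm{opt}}(n)+\delta,\,1-e^{-\varepsilon}(1-\pi_{\mathrm{opt}}(n)-\delta),\,1\right)$. *)

From Stdlib Require Import Reals Lra ZArith.
Open Scope R_scope.

Definition tsg_const (p : R) (k : nat) : R :=
  p / (1 + (1 - p) - 2 * (1 - p) ^ (S k)).

Definition tsg_pmf (p : R) (k : nat) (x : Z) : R :=
  if (Z.abs x <=? Z.of_nat k)%Z
  then tsg_const p k * (1 - p) ^ (Z.abs_nat x)
  else 0.

Definition tsg_prob (p : R) (k : nat) (P : Z -> bool) : R :=
  sum_f_R0 (fun i : nat =>
     let x := (Z.of_nat i - Z.of_nat k)%Z in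
     if P x then tsg_pmf p k x else 0) (2 * k).

Inductive outcome := drop | keep.

(** Pr[rho_pi(n) \in S], S a subset of {drop, keep}. *)
Definition rho_prob (pi : nat -> R) (n : nat) (Sset : outcome -> bool) : R :=
  (if Sset keep then pi n else 0) + (if Sset drop then 1 - pi n else 0).

Definition is_primitive (pi : nat -> R) : Prop :=
  pi 0%nat = 0 /\ forall n, 0 <= pi n <= 1.

Definition is_DP_primitive (eps delta : R) (pi : nat -> R) : Prop :=
  is_primitive pi /\
  forall n n' : nat, (n' = S n \/ n = S n') ->
    forall Sset : outcome -> bool,
      rho_prob pi n Sset <= exp eps * rho_prob pi n' Sset + delta.

Definition is_optimal_primitive (eps delta : R) (pi : nat -> R) : Prop :=
  is_DP_primitive eps delta pi /\
  forall pi', is_DP_primitive eps delta pi' -> forall n, pi' n <= pi n.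

(* Write a = e^eps.  A DP primitive obeys pi(n+1) <= a pi(n) + delta,
   1 - pi(n) <= a (1 - pi(n+1)) + delta and pi(n+1) <= 1, so by induction it is
   dominated by any DP primitive that saturates one of these three constraints at
   every step; such a primitive is therefore the optimal one.
   The hypothesis on k makes the pmf of X with parameter 1 - 1/a equal to
   x |-> delta a^(k-|x|).  Hence F(n) = Pr[n + X >= k+1] climbs from 0 by
   increments delta a^n, i.e. along the first branch pi(n+1) = a pi(n) + delta, up to
   n = k+1, and then, by symmetry of X, along the second branch down to 1.  The
   two branches meet because the same hypothesis reads ramp k + ramp (k+1) = 1. *)
From Stdlib Require Import Reals Lra Lia ZArith.
Open Scope R_scope.

Lemma sum_f_R0_single (G : nat -> R) (m N : nat) :
  (m <= N)%nat -> sum_f_R0 (fun i => if Nat.eqb i m then G i else 0) N = G m.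
Proof.
  induction N as [|N IH]; intros Hm.
  - replace m with 0%nat by lia. reflexivity.
  - cbn [sum_f_R0]. destruct (Nat.eq_dec m (S N)) as [->|Hne].
    + rewrite Nat.eqb_refl, (sum_eq _ (fun _ => 0)), sum_cte; [lra|].
      intros i Hi. destruct (Nat.eqb_spec i (S N)); [lia|reflexivity].
    + rewrite IH by lia.
      destruct (Nat.eqb_spec (S N) m); [lia|lra].
Qed.

Definition dp_step (a delta u v : R) : Prop :=
  0 <= u /\ u <= v /\ v <= 1 /\ v <= a * u + delta /\ 1 - u <= a * (1 - v) + delta.

Definition tight_step (a delta u v : R) : Prop :=
  v = a * u + delta \/ 1 - u = a * (1 - v) + delta \/ v = 1.

Lemma DP_primitive_step (eps delta : R) (pi : nat -> R) (n : nat) :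
  is_DP_primitive eps delta pi ->
  pi (S n) <= exp eps * pi n + delta /\ 1 - pi n <= exp eps * (1 - pi (S n)) + delta.
Proof.
  intros [_ Hdp]. split.
  - generalize (Hdp (S n) n (or_intror eq_refl) (fun o => if o then false else true)).
    unfold rho_prob. lra.
  - generalize (Hdp n (S n) (or_introl eq_refl) (fun o => if o then true else false)).
    unfold rho_prob. lra.
Qed.

Section OptimalPrimitive.

Variables (eps delta : R) (f : nat -> R).
Hypothesis f0 : f 0%nat = 0.

Lemma DP_primitive_le_tight (pi : nat -> R) :
  (forall n, tight_step (exp eps) delta (f n) (f (S n))) ->
  is_DP_primitive eps delta pi -> forall n, pi n <= f n.
Proof.
  intros Htight Hpi n.
  assert (Ha : 0 < exp eps) by apply exp_pos.
  induction n as [|n IH].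
  - rewrite f0, (proj1 (proj1 Hpi)). lra.
  - destruct (DP_primitive_step eps delta pi n Hpi) as [Hup Hdown].
    destruct (proj2 (proj1 Hpi) (S n)).
    destruct (Htight n) as [E|[E|E]]; nra.
Qed.

Hypotheses (Heps : 0 <= eps) (Hdelta : 0 <= delta).

Lemma DP_primitive_of_steps :
  (forall n, dp_step (exp eps) delta (f n) (f (S n))) -> is_DP_primitive eps delta f.
Proof.
  intros Hstep.
  assert (Ha := exp_ineq1_le eps).
  split.
  - split; [exact f0|]. intros n. destruct (Hstep n) as (? & ? & ? & _). lra.
  - intros n n' Hnn' Sset. unfold rho_prob.
    destruct Hnn' as [-> | ->];
      [destruct (Hstep n) as (? & ? & ? & ? & ?) | destruct (Hstep n') as (? & ? & ? & ? & ?)];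
      destruct (Sset keep), (Sset drop); nra.
Qed.

Lemma optimal_primitive_eq (pi : nat -> R) :
  (forall n, dp_step (exp eps) delta (f n) (f (S n))) ->
  (forall n, tight_step (exp eps) delta (f n) (f (S n))) ->
  is_optimal_primitive eps delta pi -> forall n, pi n = f n.
Proof.
  intros Hstep Htight [Hpi Hmax] n.
  apply Rle_antisym.
  - exact (DP_primitive_le_tight pi Htight Hpi n).
  - exact (Hmax f (DP_primitive_of_steps Hstep) n).
Qed.

End OptimalPrimitive.

Fixpoint ramp (a delta : R) (m : nat) : R :=
  match m with
  | O => 0
  | S m => a * ramp a delta m + delta
  end.

Section Ramp.

Variables a delta : R.
Hypotheses (Ha : 1 < a) (Hdelta : 0 < delta).

Lemma ramp_S_add (m : nat) : ramp a delta (S m) = ramp a delta m + delta * a ^ m.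
Proof.
  induction m as [|m IH]; [simpl; ring|].
  transitivity (a * (ramp a delta m + delta * a ^ m) + delta).
  - rewrite <- IH. reflexivity.
  - simpl. ring.
Qed.

Lemma ramp_closed (m : nat) : (a - 1) * ramp a delta m = delta * (a ^ m - 1).
Proof. induction m as [|m IH]; simpl; [ring|]. nra. Qed.

Lemma ramp_ge0 (m : nat) : 0 <= ramp a delta m.
Proof. induction m as [|m IH]; simpl; nra. Qed.

Lemma ramp_le (m m' : nat) : (m <= m')%nat -> ramp a delta m <= ramp a delta m'.
Proof.
  induction 1 as [|m' _ IH]; [lra|].
  rewrite ramp_S_add.
  assert (0 < a ^ m') by (apply pow_lt; lra).
  nra.
Qed.

Variable k : nat.
Hypothesis Hmeet : a ^ k * (a + 1) * delta = a + 2 * delta - 1.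

Lemma ramp_meet : ramp a delta k + ramp a delta (S k) = 1.
Proof.
  apply (Rmult_eq_reg_l (a - 1)); [|lra].
  rewrite Rmult_plus_distr_l, !ramp_closed. simpl. lra.
Qed.

Lemma ramp_bound (m : nat) : (m <= k)%nat -> (a + 1) * ramp a delta m <= 1 - delta.
Proof.
  intros Hm.
  assert (Hk : (a + 1) * ramp a delta k = 1 - delta) by (generalize ramp_meet; simpl; lra).
  generalize (ramp_le m k Hm) (ramp_ge0 m). nra.
Qed.

Lemma ramp_lower_step (m : nat) : (m <= k)%nat ->
  dp_step a delta (ramp a delta m) (ramp a delta (S m)) /\
  tight_step a delta (ramp a delta m) (ramp a delta (S m)).
Proof.
  intros Hm. pose proof (ramp_bound m Hm). pose proof (ramp_ge0 m). cbn [ramp].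
  split; [repeat split|left]; nra.
Qed.

Lemma ramp_upper_step (m : nat) : (m < k)%nat ->
  dp_step a delta (1 - ramp a delta (S m)) (1 - ramp a delta m) /\
  tight_step a delta (1 - ramp a delta (S m)) (1 - ramp a delta m).
Proof.
  intros Hm. pose proof (ramp_bound m ltac:(lia)). pose proof (ramp_bound (S m) Hm).
  pose proof (ramp_ge0 m). cbn [ramp] in *.
  split; [repeat split|right; left]; nra.
Qed.

End Ramp.

Definition tsg_tail (p : R) (k n : nat) : R :=
  tsg_prob p k (fun x => (Z.of_nat n + x >=? Z.of_nat k + 1)%Z).

Lemma tsg_tail_0 (p : R) (k : nat) : tsg_tail p k 0 = 0.
Proof.
  unfold tsg_tail, tsg_prob.
  rewrite (sum_eq _ (fun _ => 0)), sum_cte; [lra|].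
  intros i Hi. cbv zeta. rewrite Z.geb_leb.
  destruct (Z.leb_spec (Z.of_nat k + 1) (Z.of_nat 0 + (Z.of_nat i - Z.of_nat k))); [lia|reflexivity].
Qed.

Lemma tsg_tail_S (p : R) (k n : nat) : (n <= 2 * k)%nat ->
  tsg_tail p k (S n) = tsg_tail p k n + tsg_pmf p k (Z.of_nat k - Z.of_nat n).
Proof.
  intros Hn.
  replace (Z.of_nat k - Z.of_nat n)%Z with (Z.of_nat (2 * k - n) - Z.of_nat k)%Z by lia.
  unfold tsg_tail, tsg_prob.
  rewrite <- (sum_f_R0_single (fun i => tsg_pmf p k (Z.of_nat i - Z.of_nat k)) (2 * k - n)
                                (2 * k)) by lia.
  rewrite <- plus_sum. apply sum_eq. intros i Hi. cbv zeta. rewrite !Z.geb_leb.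
  destruct (Z.leb_spec (Z.of_nat k + 1) (Z.of_nat (S n) + (Z.of_nat i - Z.of_nat k)));
  destruct (Z.leb_spec (Z.of_nat k + 1) (Z.of_nat n + (Z.of_nat i - Z.of_nat k)));
  destruct (Nat.eqb_spec i (2 * k - n)); lia || lra.
Qed.

Lemma tsg_tail_S_gt (p : R) (k n : nat) : (2 * k < n)%nat ->
  tsg_tail p k (S n) = tsg_tail p k n.
Proof.
  intros Hn. unfold tsg_tail, tsg_prob. apply sum_eq. intros i Hi. cbv zeta.
  rewrite !Z.geb_leb.
  destruct (Z.leb_spec (Z.of_nat k + 1) (Z.of_nat (S n) + (Z.of_nat i - Z.of_nat k)));
  destruct (Z.leb_spec (Z.of_nat k + 1) (Z.of_nat n + (Z.of_nat i - Z.of_nat k))); lia || lra.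
Qed.

Section TsgTail.

Variables (a delta : R) (k : nat).
Hypotheses (Ha : 1 < a) (Hdelta : 0 < delta).
Hypothesis Hmeet : a ^ k * (a + 1) * delta = a + 2 * delta - 1.

Let F (n : nat) : R := tsg_tail (1 - / a) k n.

Lemma tsg_const_meet : tsg_const (1 - / a) k = delta * a ^ k.
Proof.
  assert (Hak : 0 < a ^ k) by (apply pow_lt; lra).
  assert (Hden : a ^ k * (a + 1) - 2 = (a - 1) / delta)
    by (apply (Rmult_eq_reg_r delta); [unfold Rdiv; rewrite Rmult_assoc, Rinv_l|]; lra).
  unfold tsg_const.
  replace (1 - (1 - / a)) with (/ a) by ring.
  rewrite <- tech_pow_Rmult, pow_inv.
  replace (1 + / a - 2 * (/ a * / a ^ k)) with ((a ^ k * (a + 1) - 2) / (a * a ^ k))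
    by (field; lra).
  rewrite Hden. field. lra.
Qed.

Lemma tsg_pmf_meet (x : Z) : (Z.abs x <= Z.of_nat k)%Z ->
  tsg_pmf (1 - / a) k x = delta * a ^ (k - Z.abs_nat x).
Proof.
  intros Hx. unfold tsg_pmf.
  replace (Z.abs x <=? Z.of_nat k)%Z with true by (symmetry; apply Z.leb_le; exact Hx).
  rewrite tsg_const_meet.
  replace (1 - (1 - / a)) with (/ a) by ring.
  replace (a ^ k) with (a ^ (k - Z.abs_nat x) * a ^ Z.abs_nat x)
    by (rewrite <- pow_add; f_equal; lia).
  rewrite pow_inv. field. apply pow_nonzero. lra.
Qed.

Lemma tsg_tail_lower (n : nat) : (n <= S k)%nat -> F n = ramp a delta n.
Proof.
  induction n as [|n IH]; intros Hn.
  - apply tsg_tail_0.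
  - unfold F. rewrite tsg_tail_S, tsg_pmf_meet, ramp_S_add by lia.
    fold (F n). rewrite IH by lia. do 3 f_equal. lia.
Qed.

(* Beyond n = 2k+1 the truncated subtraction gives ramp 0 = 0, i.e. F n = 1. *)
Lemma tsg_tail_upper (n : nat) : (S k <= n)%nat -> F n = 1 - ramp a delta (S (2 * k) - n).
Proof.
  induction 1 as [|n Hn IH].
  - rewrite tsg_tail_lower, <- (ramp_meet a delta Ha k Hmeet) by lia.
    replace (S (2 * k) - S k)%nat with k by lia. ring.
  - destruct (Nat.le_gt_cases n (2 * k)).
    + unfold F. rewrite tsg_tail_S, tsg_pmf_meet by lia. fold (F n). rewrite IH.
      replace (S (2 * k) - n)%nat with (S (S (2 * k) - S n)) by lia.
      rewrite ramp_S_add.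
      replace (k - Z.abs_nat (Z.of_nat k - Z.of_nat n))%nat with (S (2 * k) - S n)%nat
        by lia.
      ring.
    + unfold F. rewrite tsg_tail_S_gt by lia. fold (F n). rewrite IH.
      replace (S (2 * k) - S n)%nat with (S (2 * k) - n)%nat by lia. reflexivity.
Qed.

Lemma tsg_tail_step (n : nat) :
  dp_step a delta (F n) (F (S n)) /\ tight_step a delta (F n) (F (S n)).
Proof.
  destruct (Nat.le_gt_cases n k) as [Hn|Hn].
  - rewrite !tsg_tail_lower by lia. exact (ramp_lower_step a delta Ha Hdelta k Hmeet n Hn).
  - rewrite !tsg_tail_upper by lia.
    destruct (Nat.le_gt_cases n (2 * k)).
    + replace (S (2 * k) - n)%nat with (S (S (2 * k) - S n)) by lia.
      apply (ramp_upper_step a delta Ha Hdelta k Hmeet). lia.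
    + replace (S (2 * k) - n)%nat with 0%nat by lia.
      replace (S (2 * k) - S n)%nat with 0%nat by lia.
      simpl. split; [repeat split|right; right]; lra.
Qed.

End TsgTail.

Lemma exp_meet (eps delta : R) (k : nat) (Heps : 0 < eps) (Hdelta : 0 < delta)
  (Hk : INR k = / eps * ln ((exp eps + 2 * delta - 1) / ((exp eps + 1) * delta))) :
  exp eps ^ k * (exp eps + 1) * delta = exp eps + 2 * delta - 1.
Proof.
  assert (Ha := exp_ineq1_le eps).
  rewrite <- (Rpower_pow k (exp eps)) by apply exp_pos.
  unfold Rpower. rewrite ln_exp, Hk.
  replace (/ eps * ln ((exp eps + 2 * delta - 1) / ((exp eps + 1) * delta)) * eps)
    with (ln ((exp eps + 2 * delta - 1) / ((exp eps + 1) * delta))) by (field; lra).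
  rewrite exp_ln.
  - field. lra.
  - apply Rdiv_lt_0_compat; [|apply Rmult_lt_0_compat]; lra.
Qed.

Theorem theorem5 (eps delta : R) (k : nat)
  (Heps : 0 < eps) (Hdelta : 0 < delta < 1)
  (Hk : INR k = / eps * ln ((exp eps + 2 * delta - 1) / ((exp eps + 1) * delta)))
  (pi_opt : nat -> R) (Hopt : is_optimal_primitive eps delta pi_opt) :
  forall n : nat,
    pi_opt n = tsg_prob (1 - exp (- eps)) k
                 (fun x => (Z.of_nat n + x >=? Z.of_nat k + 1)%Z).
Proof.
  intros n. change (pi_opt n = tsg_tail (1 - exp (- eps)) k n).
  assert (Ha : 1 < exp eps) by (generalize (exp_ineq1_le eps); lra).
  assert (Hmeet := exp_meet eps delta k Heps (proj1 Hdelta) Hk).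
  assert (Hstep := tsg_tail_step (exp eps) delta k Ha (proj1 Hdelta) Hmeet).
  rewrite exp_Ropp.
  apply (optimal_primitive_eq eps delta);
    [apply tsg_tail_0 | lra | lra | intros m; apply Hstep | intros m; apply Hstep | exact Hopt].
Qed.
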